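(* Let $r\geq3$ be fixed and $\gamma_{n,r}=\sqrt{(r-2)(n-r+2)}$. For each sufficiently large $n$, let $G$ be an $n$-vertex $K_r$-minor free graph with maximum spread, and let $L$ be a set of $r-2$ vertices of $G$ such that every vertex of $L$ is adjacent to every vertex of $V(G)\setminus L$ and $V(G)\setminus L$ is independent (such a set exists for $n$ large). Let $A_L$ be the adjacency matrix of $G[L]$, $\ell_1=\mathbf 1^{\mathrm T}A_L\mathbf 1$ and $\ell_2=\mathbf 1^{\mathrm T}A_L^2\mathbf 1$. Then \[ s(G)=2\gamma_{n,r}+\frac{1}{r-2}\Big(-\frac{3}{4(r-2)}\ell_1^2+\ell_2\Big)\frac{1}{\gamma_{n,r}}+O\Big(\frac{1}{\gamma_{n,r}^3}\Big). \]
   Context: $s(G)=\lambda_1(G)-\lambda_n(G)$ is the spread (difference of largest and smallest adjacency eigenvalues). $\mathbf 1$ is the all-ones vector. Implicit constants depend only on $r$. *)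

From HB Require Import structures.
From mathcomp Require Import all_boot all_order all_algebra.
From mathcomp Require Import boolp classical_sets reals.
Set Implicit Arguments. Unset Strict Implicit. Unset Printing Implicit Defensive.
Import Order.TTheory GRing.Theory Num.Theory.
Local Open Scope ring_scope.


Definition simple_graph (n : nat) (e : rel 'I_n) : Prop :=
  (forall u v, e u v = e v u) /\ (forall u, ~~ e u u).

Definition connected_in (n : nat) (e : rel 'I_n) (B : {set 'I_n}) : Prop :=
  forall x y, x \in B -> y \in B ->
    connect (fun u v => [&& e u v, u \in B & v \in B]) x y.

Definition has_K_minor (r n : nat) (e : rel 'I_n) : Prop :=
  exists B : 'I_r -> {set 'I_n},
    [/\ forall i, B i != finset.set0,
        forall i, connected_in e (B i),
        forall i j, i != j -> [disjoint B i & B j] &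
        forall i j, i != j -> exists u v, [/\ u \in B i, v \in B j & e u v]].

Definition K_minor_free (r n : nat) (e : rel 'I_n) : Prop := ~ has_K_minor r e.

Definition adj_mx (R : realType) (n : nat) (e : rel 'I_n) : 'M[R]_n :=
  \matrix_(i, j) (e i j)%:R.

(* Largest and smallest (real) adjacency eigenvalues; the adjacency matrix is
   real symmetric, so all its eigenvalues are real. *)
Definition lambda_max (R : realType) (n : nat) (e : rel 'I_n) : R :=
  sup [set x : R | eigenvalue (adj_mx R e) x]%classic.
Definition lambda_min (R : realType) (n : nat) (e : rel 'I_n) : R :=
  inf [set x : R | eigenvalue (adj_mx R e) x]%classic.

Definition spread (R : realType) (n : nat) (e : rel 'I_n) : R :=
  lambda_max R e - lambda_min R e.

Definition max_spread_Kr_free (R : realType) (r n : nat) (e : rel 'I_n) : Prop :=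
  simple_graph e /\ K_minor_free r e /\
  forall e' : rel 'I_n, simple_graph e' -> K_minor_free r e' ->
    spread R e' <= spread R e.

Definition gamma_nr (R : realType) (n r : nat) : R :=
  Num.sqrt ((r%:R - 2) * (n%:R - r%:R + 2)).

Definition ell1 (R : realType) (n : nat) (e : rel 'I_n) (L : {set 'I_n}) : R :=
  \sum_(i in L) \sum_(j in L) (e i j)%:R.
Definition ell2 (R : realType) (n : nat) (e : rel 'I_n) (L : {set 'I_n}) : R :=
  \sum_(i in L) \sum_(j in L) \sum_(k in L) (e i k)%:R * (e k j)%:R.

(* Write k = |L| = r - 2 and m = n - k.  If x is an eigenvector of G for the
   eigenvalue lam, then lam x_j = s := sum_(i in L) x_i for j outside L, and
   lam x_L = A_L x_L + Y 1 with Y = sum_(i notin L) x_i, so that lam Y = m s.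
   For |lam| >= 2k the second equation is solved by a Neumann series:
   s = Y 1^T (lam - A_L)^-1 1 = Y (k/lam + l1/lam^2 + l2/lam^3 + l3/lam^4 + O(lam^-5)),
   where l_t counts the walks of length t in G[L].  So every large eigenvalue
   almost solves lam^2 = m lam (k/lam + ...); conversely, by Cramer's rule the
   exact equation is polynomial, and a sign change of its approximation yields
   an eigenvalue by the intermediate value theorem.  Substituting lam = +-mu and
   g^2 = k m turns the truncated equation into psi(mu) = 0, whose root is
   g + al + be/g + ga/g^2 + O(g^-3) with al = +-l1/(2k); psi increases there, so
   both extreme eigenvalues are pinned down to O(g^-3), and the +-al and +-ga
   cancel in s(G) = 2g + 2be/g + O(g^-3).  The constants depend on (l1, l2, l3),
   but these are integers bounded in terms of r, so finitely many cases yield a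
   uniform constant. *)

From HB Require Import structures.
From mathcomp Require Import all_boot all_order all_algebra.
From mathcomp Require Import boolp classical_sets reals.
From mathcomp Require Import ring lra.
From mathcomp Require polyrcf.
Import Order.TTheory GRing.Theory Num.Theory.
Local Open Scope ring_scope.
Set Implicit Arguments. Unset Strict Implicit. Unset Printing Implicit Defensive.

Lemma norm_sum_pow_le (R : numDomainType) (s : seq R) (h : R) : 0 <= h <= 1 ->
  `|\sum_(i < size s) s`_i * h ^+ i| <= \sum_(i < size s) `|s`_i|.
Proof.
move=> /andP[h0 h1]; apply: le_trans (ler_norm_sum _ _ _) _.
apply: ler_sum => i _; rewrite normrM normrX (ger0_norm h0).
by rewrite ler_piMr // exprn_ile1.
Qed.

Lemma lerNnormM (R : realDomainType) (x y : R) : 0 <= y -> - (`|x| * y) <= x * y.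
Proof. by move=> y0; have := lerNnormlW (lexx `|x * y|); rewrite normrM (ger0_norm y0). Qed.

Lemma lerNnormMW (R : realDomainType) (x y z : R) : 0 <= y <= z -> - (`|x| * z) <= x * y.
Proof.
move=> /andP[y0 yz]; apply: le_trans (lerNnormM x y0).
by rewrite lerN2 ler_wpM2l.
Qed.

Section Psi.
Variables (R : realFieldType) (k al be ga : R).
Hypothesis k_gt0 : 0 < k.

Definition psi_c1 := 2 * k * al.
Definition psi_c2 := 2 * k * be + 3 * k * al ^+ 2.
Definition psi_c3 := 2 * k * ga + 8 * k * al * be + 4 * k * al ^+ 3.

Definition psi (g mu : R) :=
  mu ^+ 2 - g ^+ 2 - g ^+ 2 / k * (psi_c1 / mu + psi_c2 / mu ^+ 2 + psi_c3 / mu ^+ 3).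

Definition approx_root (g : R) := g + al + be / g + ga / g ^+ 2.

Definition root_factor (h : R) := 1 + al * h + be * h ^+ 2 + ga * h ^+ 3.

(* The coefficients of the polynomial [rem_poly] of [rem_polyE], obtained by
   expanding its left-hand side, which vanishes to order 4 at [h = 0]. *)
Definition rem_coefs : seq R :=
[:: (5*be^+2*k + 10*al*ga*k + 20*al^+2*be*k + 5*al^+4*k);
 (12*be*ga*k + 25*al*be^+2*k + 20*al^+2*ga*k + 20*al^+3*be*k + al^+5*k);
 (7*ga^+2*k + 9*be^+3*k + 50*al*be*ga*k + 30*al^+2*be^+2*k + 20*al^+3*ga*k + 5*al^+4*be*k);
 (27*be^+2*ga*k + 25*al*ga^+2*k + 20*al*be^+3*k + 60*al^+2*be*ga*k + 10*al^+3*be^+2*k + 5*al^+4*ga*k);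
 (27*be*ga^+2*k + 5*be^+4*k + 60*al*be^+2*ga*k + 30*al^+2*ga^+2*k + 10*al^+2*be^+3*k + 20*al^+3*be*ga*k);
 (9*ga^+3*k + 20*be^+3*ga*k + 60*al*be*ga^+2*k + 5*al*be^+4*k + 30*al^+2*be^+2*ga*k + 10*al^+3*ga^+2*k);
 (30*be^+2*ga^+2*k + be^+5*k + 20*al*ga^+3*k + 20*al*be^+3*ga*k + 30*al^+2*be*ga^+2*k);
 (20*be*ga^+3*k + 5*be^+4*ga*k + 30*al*be^+2*ga^+2*k + 10*al^+2*ga^+3*k);
 (5*ga^+4*k + 10*be^+3*ga^+2*k + 20*al*be*ga^+3*k);
 (10*be^+2*ga^+3*k + 5*al*ga^+4*k);
 (5*be*ga^+4*k);
 (ga^+5*k)].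

Definition rem_poly (h : R) := \sum_(i < size rem_coefs) rem_coefs`_i * h ^+ i.

Lemma rem_polyE h : let w := root_factor h in
  k * w ^+ 3 * (w ^+ 2 - 1) - h * psi_c1 * w ^+ 2 - h ^+ 2 * psi_c2 * w
  - h ^+ 3 * psi_c3 = h ^+ 4 * rem_poly h.
Proof.
rewrite /rem_poly /root_factor /= !big_ord_recl big_ord0 /=.
rewrite /psi_c1 /psi_c2 /psi_c3 /bump /=; ring.
Qed.

Lemma approx_rootE g : g != 0 -> approx_root g = g * root_factor g^-1.
Proof. by move=> g0; rewrite /approx_root /root_factor; field. Qed.

Lemma psi_scaled g w : g != 0 -> w != 0 ->
  psi g (g * w) = g ^+ 2 * (k * w ^+ 3 * (w ^+ 2 - 1) - g^-1 * psi_c1 * w ^+ 2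
     - g^-1 ^+ 2 * psi_c2 * w - g^-1 ^+ 3 * psi_c3) / (k * w ^+ 3).
Proof. by move=> g0 w0; rewrite /psi; field; rewrite w0 g0 gt_eqF. Qed.

Lemma root_factor_ge h : 0 < h <= 1 -> (`|al| + `|be| + `|ga|) * h <= 1 / 2 ->
  1 / 2 <= root_factor h.
Proof.
move=> /andP[h0 h1] Sh.
have hh2 : h ^+ 2 <= h by rewrite expr2 ler_piMl // ltW.
have hh3 : h ^+ 3 <= h by rewrite exprS ler_piMr ?exprn_ile1 // ltW.
have e1 := lerNnormM al (ltW h0).
have e2 : - (`|be| * h) <= be * h ^+ 2.
  by apply: lerNnormMW; rewrite hh2 exprn_ge0 // ltW.
have e3 : - (`|ga| * h) <= ga * h ^+ 3.
  by apply: lerNnormMW; rewrite hh3 exprn_ge0 // ltW.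
rewrite /root_factor; lra.
Qed.

Lemma psi_approx_root : exists D G, 1 <= G /\
  forall g, G <= g -> `|psi g (approx_root g)| <= D / g ^+ 2.
Proof.
set S := `|al| + `|be| + `|ga|.
have S0 : 0 <= S by rewrite /S !addr_ge0.
set D4 := \sum_(i < size rem_coefs) `|rem_coefs`_i|.
exists (8 / k * D4), (2 * S + 1); split; first lra.
move=> g Hg; have g0 : 0 < g by lra.
set h := g^-1.
have h0 : 0 < h by rewrite invr_gt0.
have h1 : h <= 1 by rewrite invr_le1 ?unitfE ?gt_eqF //; lra.
have gh : g * h = 1 by rewrite mulfV // gt_eqF.
have w12 : 1 / 2 <= root_factor h.
  apply: root_factor_ge; first by rewrite h0.
  have SG : S <= g / 2 by lra.
  have := ler_wpM2r (ltW h0) SG; rewrite -/S; nra.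
set w := root_factor h in w12 *.
have w0 : 0 < w by lra.
have Ep : psi g (approx_root g) = h ^+ 2 * rem_poly h / (k * w ^+ 3).
  rewrite approx_rootE ?gt_eqF // psi_scaled ?gt_eqF // -/h -/w rem_polyE.
  congr (_ / _); rewrite mulrA; congr (_ * _).
  by rewrite (_ : 4 = 2 + 2)%N // exprD mulrA -exprMn gh expr1n mul1r.
have Qb : `|rem_poly h| <= D4 by apply: norm_sum_pow_le; rewrite ltW.
have w3 : 1 / 8 <= w ^+ 3 by rewrite !exprS expr0; nra.
have key : `|rem_poly h| / (k * w ^+ 3) <= 8 / k * D4.
  rewrite ler_pdivrMr ?mulr_gt0 ?exprn_gt0 //.
  rewrite (_ : 8 / k * D4 * (k * w ^+ 3) = 8 * D4 * w ^+ 3); last by field; rewrite gt_eqF.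
  have D40 : 0 <= D4 by apply: le_trans Qb.
  nra.
rewrite Ep normrM normfV normrM (ger0_norm (exprn_ge0 _ (ltW h0))).
rewrite (gtr0_norm (mulr_gt0 k_gt0 (exprn_gt0 _ w0))) -mulrA [X in _ <= X]mulrC.
by rewrite /h exprVn ler_wpM2l // invr_ge0 exprn_ge0 // ltW.
Qed.

Lemma psi_sub g u v : u != 0 -> v != 0 ->
  psi g u - psi g v = (u - v) * (u + v + g ^+ 2 / k * (psi_c1 / (u * v)
    + psi_c2 * (u + v) / (u ^+ 2 * v ^+ 2)
    + psi_c3 * (u ^+ 2 + u * v + v ^+ 2) / (u ^+ 3 * v ^+ 3))).
Proof. by move=> u0 v0; rewrite /psi; field; rewrite u0 v0 gt_eqF. Qed.

Definition psi_slope_bound := (4 * `|psi_c1| + 16 * `|psi_c2| + 48 * `|psi_c3|) / k.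

Lemma psi_slope_ge p q t : 0 < p <= 2 -> 0 < q <= 2 -> 0 < t <= 1 ->
  - psi_slope_bound <= (psi_c1 * (p * q) + psi_c2 * (p * q * (p + q) * t)
                        + psi_c3 * (p * q * (p ^+ 2 + p * q + q ^+ 2) * t ^+ 2)) / k.
Proof.
move=> /andP[p0 p2] /andP[q0 q2] /andP[t0 t1].
have B1 : 0 <= p * q <= 4 by apply/andP; split; nra.
have B2 : 0 <= p * q * (p + q) * t <= 16.
  have m0 : 0 <= p * q * (p + q) by rewrite !mulr_ge0 ?addr_ge0 // ltW.
  apply/andP; split; first by rewrite mulr_ge0 // ltW.
  by apply: le_trans (_ : p * q * (p + q) <= 16); [rewrite ler_piMr | nra].
have B3 : 0 <= p * q * (p ^+ 2 + p * q + q ^+ 2) * t ^+ 2 <= 48.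
  have s0 : 0 <= p ^+ 2 + p * q + q ^+ 2 by nra.
  have m0 : 0 <= p * q * (p ^+ 2 + p * q + q ^+ 2) by rewrite !mulr_ge0 // ltW.
  apply/andP; split; first by rewrite mulr_ge0 // exprn_ge0 // ltW.
  apply: le_trans (_ : p * q * (p ^+ 2 + p * q + q ^+ 2) <= 48); last by nra.
  by rewrite ler_piMr // exprn_ile1 // ltW.
have L1 := lerNnormMW psi_c1 B1; have L2 := lerNnormMW psi_c2 B2.
have L3 := lerNnormMW psi_c3 B3.
rewrite /psi_slope_bound -mulNr ler_pM2r ?invr_gt0 //; lra.
Qed.

Lemma psi_sub_ge : exists G, 1 <= G /\ forall g u v, G <= g -> g / 2 <= v -> v <= u ->
  (u - v) * (g / 2) <= psi g u - psi g v.
Proof.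
have D0 : 0 <= psi_slope_bound.
  rewrite divr_ge0 ?(ltW k_gt0) //.
  have := normr_ge0 psi_c1; have := normr_ge0 psi_c2; have := normr_ge0 psi_c3; lra.
exists (2 * psi_slope_bound + 1); split; first lra.
move=> g u v Hg Hv Huv.
have g0 : 0 < g by lra.
have v0 : 0 < v by lra.
have u0 : 0 < u by lra.
rewrite psi_sub ?gt_eqF //; apply: ler_wpM2l; first lra.
have E : g ^+ 2 / k * (psi_c1 / (u * v) + psi_c2 * (u + v) / (u ^+ 2 * v ^+ 2)
    + psi_c3 * (u ^+ 2 + u * v + v ^+ 2) / (u ^+ 3 * v ^+ 3))
  = let p := g / u in let q := g / v in let t := g^-1 in
    (psi_c1 * (p * q) + psi_c2 * (p * q * (p + q) * t)
     + psi_c3 * (p * q * (p ^+ 2 + p * q + q ^+ 2) * t ^+ 2)) / k.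
  by rewrite /=; field; rewrite !gt_eqF.
have hp : 0 < g / u <= 2 by rewrite divr_gt0 // ler_pdivrMr //=; lra.
have hq : 0 < g / v <= 2 by rewrite divr_gt0 // ler_pdivrMr //=; lra.
have ht : 0 < g^-1 <= 1 by rewrite invr_gt0 g0 invr_le1 ?unitfE ?gt_eqF //=; lra.
have := psi_slope_ge hp hq ht; rewrite E /=; lra.
Qed.

Lemma approx_root_ge g c : 0 <= c -> 2 * (`|al| + `|be| + `|ga| + c) + 1 <= g ->
  g / 2 <= approx_root g - c / g ^+ 3.
Proof.
move=> c0 Hg.
have Sn : 0 <= `|al| + `|be| + `|ga| by rewrite !addr_ge0.
have g1 : 1 <= g by lra.
have gi0 : 0 <= g^-1 by rewrite invr_ge0; lra.
have gi1 : g^-1 <= 1 by rewrite invr_le1 ?unitfE ?gt_eqF //; lra.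
have e1 : - `|be| <= be / g.
  by apply: le_trans (lerNnormM be gi0); rewrite lerN2 ler_piMr.
have e2 : - `|ga| <= ga / g ^+ 2.
  rewrite -exprVn; apply: le_trans (lerNnormM ga (exprn_ge0 2 gi0)).
  by rewrite lerN2 ler_piMr // exprn_ile1.
have e3 : c / g ^+ 3 <= c.
  by rewrite ler_pdivrMr ?exprn_gt0 ?ler_peMr ?exprn_ege1 //; lra.
have e4 : - `|al| <= al by rewrite lerNl -normrN ler_norm.
rewrite /approx_root; lra.
Qed.

Definition root_bracket (K c g : R) : Prop :=
  [/\ g / 2 <= approx_root g - c / g ^+ 3,
      K / g ^+ 2 < psi g (approx_root g + c / g ^+ 3),
      psi g (approx_root g - c / g ^+ 3) < - (K / g ^+ 2) &
      forall mu, g / 2 <= mu -> psi g mu <= K / g ^+ 2 -> mu < approx_root g + c / g ^+ 3].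

Lemma psi_root_bracket K : 0 <= K ->
  exists c G, 0 < c /\ 1 <= G /\ forall g, G <= g -> root_bracket K c g.
Proof.
move=> K0.
have [D [Gc [Gc1 HC]]] := psi_approx_root.
have [Gm [Gm1 HM]] := psi_sub_ge.
have D0 := normr_ge0 D.
set c := 2 * (K + `|D|) + 1.
have c0 : 0 < c by rewrite /c; lra.
set S := `|al| + `|be| + `|ga|.
have S0 : 0 <= S by rewrite /S !addr_ge0.
exists c, (Gc + Gm + 2 * (S + c) + 1); split => //; split; first lra.
move=> g Hg; have g0 : 0 < g by lra.
rewrite /root_bracket; set w := g^-1 ^+ 2.
have w0 : 0 < w by rewrite exprn_gt0 // invr_gt0.
have Ew x : x / g ^+ 2 = x * w by rewrite /w exprVn.
rewrite !Ew.
set a := approx_root g; set t := c / g ^+ 3.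
have Et : t * (g / 2) = (c / 2) * w by rewrite /t /w; field; rewrite gt_eqF.
have t0 : 0 <= t by rewrite /t divr_ge0 ?exprn_ge0 // ltW.
have Hi : g / 2 <= a - t by apply: approx_root_ge; rewrite ?(ltW c0) // -/S; lra.
have Ha : g / 2 <= a by lra.
have /ler_normlP[Hc1 Hc2] : `|psi g a| <= `|D| * w.
  by apply: le_trans (HC g _) _; rewrite ?Ew ?ler_wpM2r ?ler_norm ?ltW //; lra.
have M1 := HM g (a + t) a ltac:(lra) Ha ltac:(lra).
have M2 := HM g a (a - t) ltac:(lra) Hi ltac:(lra).
rewrite (_ : a + t - a = t) 1?Et in M1; last by ring.
rewrite (_ : a - (a - t) = t) 1?Et in M2; last by ring.
have Kc : K * w + `|D| * w < (c / 2) * w by rewrite -mulrDl ltr_pM2r // /c; lra.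
split; [exact: Hi | lra | lra |].
move=> mu Hmu Hp; rewrite ltNge; apply/negP => Hle.
have M3 := HM g mu (a + t) ltac:(lra) ltac:(lra) Hle.
have : 0 <= (mu - (a + t)) * (g / 2) by apply: mulr_ge0; lra.
lra.
Qed.

End Psi.

Section Resolvent.
Variables (R : realFieldType) (n : nat) (e : rel 'I_n) (L : {set 'I_n}).
Local Notation k := (#|L|%:R : R).

Definition adjL (f : 'I_n -> R) (j : 'I_n) : R := \sum_(i in L) (e i j)%:R * f i.
Definition sumL (f : 'I_n -> R) : R := \sum_(j in L) f j.

Definition walks (t : nat) : R := sumL (iter t adjL (fun _ => 1)).

Definition resolvent3 (lam : R) : R :=
  k / lam + walks 1 / lam ^+ 2 + walks 2 / lam ^+ 3 + walks 3 / lam ^+ 4.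

Lemma eq_adjL f f' : {in L, f =1 f'} -> adjL f =1 adjL f'.
Proof. by move=> H j; apply: eq_bigr => i iL; rewrite H. Qed.

Lemma eq_sumL f f' : {in L, f =1 f'} -> sumL f = sumL f'.
Proof. by move=> H; apply: eq_bigr => i iL; rewrite H. Qed.

Lemma adjL_lin (a b : R) f f' :
  adjL (fun i => a * f i + b * f' i) =1 (fun j => a * adjL f j + b * adjL f' j).
Proof. by move=> j; rewrite /adjL !mulr_sumr -big_split /=; apply: eq_bigr => i _; ring. Qed.

Lemma adjL_scale (a : R) f j : adjL (fun i => a * f i) j = a * adjL f j.
Proof. by rewrite /adjL mulr_sumr; apply: eq_bigr => i _; ring. Qed.

Lemma sumL_lin (a b : R) f f' :
  sumL (fun i => a * f i + b * f' i) = a * sumL f + b * sumL f'.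
Proof. by rewrite /sumL !mulr_sumr -big_split. Qed.

Lemma sumL_scale (a : R) f : sumL (fun i => a * f i) = a * sumL f.
Proof. by rewrite /sumL mulr_sumr. Qed.

Lemma norm_sumL_le f B : {in L, forall i, `|f i| <= B} -> `|sumL f| <= k * B.
Proof.
move=> H; apply: le_trans (ler_norm_sum _ _ _) _.
by rewrite mulr_natl -sumr_const; apply: ler_sum.
Qed.

Lemma norm_adjL_le f B : {in L, forall i, `|f i| <= B} -> forall j, `|adjL f j| <= k * B.
Proof.
move=> H j; apply: le_trans (ler_norm_sum _ _ _) _.
rewrite mulr_natl -sumr_const; apply: ler_sum => i iL.
rewrite normrM; case: (e i j); rewrite ?normr1 ?mul1r ?H //.
by rewrite normr0 mul0r; apply: le_trans (H i iL).
Qed.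

Section Solution.
Variables (lam Y : R) (x : 'I_n -> R).
Hypothesis x_eq : {in L, forall j, lam * x j = adjL x j + Y}.

Lemma resolvent_norm_le : 0 < k -> 2 * k <= `|lam| ->
  {in L, forall j, `|x j| <= 2 * `|Y| / `|lam|}.
Proof.
move=> k_gt0 lam_ge.
have l0 : 0 < `|lam| by lra.
set M := \big[Num.max/0]_(i in L) `|x i|.
have Mb : {in L, forall i, `|x i| <= M} by move=> i iL; exact: le_bigmax_cond.
have M0 : 0 <= M.
  have [i iL] : exists i, i \in L by apply/set0Pn; rewrite -card_gt0 -(ltr0n R).
  exact: le_trans (normr_ge0 (x i)) (Mb i iL).
have HM : M * `|lam| <= k * M + `|Y|.
  rewrite -ler_pdivlMr //; apply: bigmax_le => [|i iL].
    by apply: divr_ge0; [have := normr_ge0 Y; nra | lra].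
  rewrite ler_pdivlMr // mulrC -normrM x_eq //.
  by apply: le_trans (ler_normD _ _) _; rewrite lerD2r norm_adjL_le.
move=> j jL; apply: le_trans (Mb j jL) _.
rewrite ler_pdivlMr //; nra.
Qed.

(* Solving [x = (Y 1 + A_L x) / lam] by substituting it into itself four times. *)
Lemma resolvent_sum_approx : 0 < k -> 2 * k <= `|lam| ->
  `|sumL x - Y * resolvent3 lam| <= 2 * k ^+ 5 * `|Y| / `|lam| ^+ 5.
Proof.
move=> k_gt0 lam_ge.
have l0 : 0 < `|lam| by lra.
have lam0 : lam != 0 by rewrite -normr_gt0.
have s0 : {in L, x =1 fun i => Y / lam * 1 + lam^-1 * adjL x i}.
  by move=> i iL; apply: (mulfI lam0); rewrite x_eq //; field.
have step g f : (forall j, g j = Y / lam * f j + lam^-1 * adjL g j) ->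
    forall j, adjL g j = Y / lam * adjL f j + lam^-1 * adjL (adjL g) j.
  by move=> Hf j; rewrite (eq_adjL (fun i _ => Hf i)) adjL_lin.
have H1 j : adjL x j = Y / lam * adjL (fun _ => 1) j + lam^-1 * adjL (adjL x) j.
  by rewrite (eq_adjL s0) adjL_lin.
have H2 := step _ _ H1; have H3 := step _ _ H2.
have E : sumL x - Y * resolvent3 lam = sumL (adjL (adjL (adjL (adjL x)))) / lam ^+ 4.
  rewrite (eq_sumL s0) sumL_lin (eq_sumL (fun i _ => H1 i)) sumL_lin.
  rewrite (eq_sumL (fun i _ => H2 i)) sumL_lin (eq_sumL (fun i _ => H3 i)) sumL_lin.
  by rewrite /resolvent3 /walks /sumL sumr_const /=; field.
rewrite E normrM normfV normrX ler_pdivrMr ?exprn_gt0 //.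
have T1 := norm_adjL_le (resolvent_norm_le k_gt0 lam_ge).
have T2 := norm_adjL_le (fun i _ => T1 i).
have T3 := norm_adjL_le (fun i _ => T2 i).
have T4 := norm_adjL_le (fun i _ => T3 i).
apply: le_trans (norm_sumL_le (fun i _ => T4 i)) _.
by rewrite le_eqVlt; apply/orP; left; apply/eqP; field; rewrite gt_eqF.
Qed.

End Solution.

Lemma walks_nat t : exists2 w, (w <= #|L| ^ t.+1)%N & walks t = w%:R.
Proof.
have iter_nat : exists F : 'I_n -> nat,
    (forall i, F i <= #|L| ^ t)%N /\ forall i, iter t adjL (fun _ => 1) i = (F i)%:R.
  elim: t => [|t [F [FB Ff]]]; first by exists (fun _ => 1%N).
  exists (fun j => \sum_(i in L) e i j * F i)%N; split => [j|j].
    rewrite expnS -sum_nat_const; apply: leq_sum => i _.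
    by case: (e i j); rewrite ?mul1n ?mul0n.
  by rewrite /= /adjL natr_sum; apply: eq_bigr => i _; rewrite natrM Ff.
have [F [FB Ff]] := iter_nat.
exists (\sum_(i in L) F i)%N; last by rewrite /walks /sumL natr_sum; apply: eq_bigr.
by rewrite expnS -sum_nat_const; apply: leq_sum.
Qed.

End Resolvent.

Lemma ell1E (R : realType) n (e : rel 'I_n) L : ell1 R e L = walks R e L 1.
Proof.
rewrite /ell1 /walks /sumL /= /adjL exchange_big /=.
by apply: eq_bigr => i _; apply: eq_bigr => j _; rewrite mulr1.
Qed.

Lemma ell2E (R : realType) n (e : rel 'I_n) L : ell2 R e L = walks R e L 2.
Proof.
rewrite /ell2 /walks /sumL /= /adjL.
transitivity (\sum_(m in L) \sum_(j in L) \sum_(i in L) (e i j)%:R * (e m i)%:R :> R).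
  by apply: eq_bigr => m _; apply: eq_bigr => j _; apply: eq_bigr => i _; rewrite mulrC.
rewrite exchange_big /=; apply: eq_bigr => j _.
rewrite exchange_big /=; apply: eq_bigr => i _.
by rewrite mulr_sumr; apply: eq_bigr => m _; rewrite mulr1.
Qed.

Section Spectrum.
Variables (R : realType) (n : nat) (e : rel 'I_n) (L : {set 'I_n}).
Hypothesis e_sym : forall u v, e u v = e v u.
Hypothesis e_in_out : forall u v, u \in L -> v \notin L -> e u v.
Hypothesis e_out_out : forall u v, u \notin L -> v \notin L -> ~~ e u v.

Local Notation A := (adj_mx R e).
Local Notation k := (#|L|%:R : R).
Local Notation m := (#|~: L|%:R : R).

Lemma mulmx_adj_row (v : 'rV[R]_n) j : (v *m A) 0 j = \sum_i v 0 i * (e i j)%:R.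
Proof. by rewrite mxE; apply: eq_bigr => i _; rewrite mxE. Qed.

Lemma mulmx_adj_row_in (v : 'rV[R]_n) j : j \in L ->
  (v *m A) 0 j = adjL e L (fun i => v 0 i) j + \sum_(i in ~: L) v 0 i.
Proof.
move=> jL; rewrite mulmx_adj_row (bigID (mem L)) /=; congr (_ + _).
  by apply: eq_bigr => i _; rewrite mulrC.
by apply: eq_big => [i|i]; rewrite ?inE // => iL; rewrite e_sym e_in_out // mulr1.
Qed.

Lemma mulmx_adj_row_out (v : 'rV[R]_n) j : j \notin L ->
  (v *m A) 0 j = sumL L (fun i => v 0 i).
Proof.
move=> jL; rewrite mulmx_adj_row (bigID (mem L)) /= [X in _ + X]big1 ?addr0.
  by apply: eq_bigr => i iL; rewrite e_in_out // mulr1.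
by move=> i iL; rewrite (negbTE (e_out_out iL jL)) mulr0.
Qed.

(* Away from the spectrum of [G[L]], the eigenvalues of [G] are the roots of
   [lam - m 1^T (lam - A_L)^-1 1]; [resolvent3] truncates the resolvent sum. *)
Definition secular (lam : R) := lam ^+ 2 - m * lam * resolvent3 e L lam.

Lemma norm_secular_err_le lam Y (x : 'I_n -> R) : 0 < k -> 2 * k <= `|lam| -> Y != 0 ->
  {in L, forall j, lam * x j = adjL e L x j + Y} ->
  `|lam * m * (sumL L x - Y * resolvent3 e L lam) / Y| <= 2 * m * k ^+ 5 / `|lam| ^+ 4.
Proof.
move=> k_gt0 lam_ge Y0 x_eq.
have l0 : 0 < `|lam| by lra.
have Yp : 0 < `|Y| by rewrite normr_gt0.
rewrite normrM normfV !normrM (ger0_norm (ler0n _ _)) ler_pdivrMr //.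
apply: le_trans (_ : `|lam| * m * (2 * k ^+ 5 * `|Y| / `|lam| ^+ 5) <= _).
  by rewrite ler_wpM2l ?resolvent_sum_approx // mulr_ge0 ?ler0n.
by rewrite le_eqVlt; apply/orP; left; apply/eqP; field; rewrite gt_eqF.
Qed.

Lemma eigen_secular_small lam (v : 'rV[R]_n) : v *m A = lam *: v -> v != 0 ->
  0 < k -> 2 * k <= `|lam| -> `|secular lam| <= 2 * m * k ^+ 5 / `|lam| ^+ 4.
Proof.
move=> Hv vn0 k_gt0 lam_ge.
have lam0 : lam != 0 by rewrite -normr_gt0; lra.
set x := fun i => v 0 i; set Y := \sum_(i in ~: L) x i; set s := sumL L x.
have x_in : {in L, forall j, lam * x j = adjL e L x j + Y}.
  by move=> j jL; rewrite -mulmx_adj_row_in // Hv mxE.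
have x_out j : j \notin L -> lam * x j = s.
  by move=> jL; have := mulmx_adj_row_out v jL; rewrite Hv mxE.
have lamY : lam * Y = m * s.
  rewrite /Y mulr_sumr (eq_bigr (fun _ => s)) ?sumr_const ?mulr_natl // => i.
  by rewrite inE; exact: x_out.
have Y0 : Y != 0.
  apply: contraNneq vn0 => Y0; apply/eqP/rowP => j; rewrite mxE.
  have xL : {in L, forall i, x i = 0}.
    move=> i iL; apply/normr0_eq0/eqP; rewrite eq_le normr_ge0 andbT.
    by have := resolvent_norm_le x_in k_gt0 lam_ge iL; rewrite Y0 normr0 mulr0 mul0r.
  have [jL|jL] := boolP (j \in L); first exact: xL.
  have := x_out j jL; rewrite /s /sumL big1 // => /eqP.
  by rewrite mulf_eq0 (negbTE lam0) => /eqP.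
have -> : secular lam = lam * m * (s - Y * resolvent3 e L lam) / Y.
  rewrite /secular (_ : lam ^+ 2 = lam * (m * s) / Y); last by rewrite -lamY; field.
  by field.
exact: norm_secular_err_le.
Qed.

Definition eL : rel 'I_n := fun i j => [&& i \in L, j \in L & e i j].
Local Notation AL := (adj_mx R eL).

Definition indicL (T : nzRingType) : 'rV[T]_n := \row_i (i \in L)%:R.

Definition charL (lam : R) := (char_poly AL).[lam].

Definition solL (lam : R) : 'rV[R]_n := indicL R *m \adj (lam%:M - AL).

(* [secular_num lam / charL lam] is [lam - m 1^T (lam - A_L)^-1 1], by Cramer's rule. *)
Definition secular_num (lam : R) := lam * charL lam - m * sumL L (solL lam 0).

Definition secular_poly : {poly R} :=
  'X * char_poly AL - m%:P * \sum_(j in L) (indicL _ *m \adj (char_poly_mx AL)) 0 j.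

Lemma char_poly_mx_eval lam : map_mx (horner_eval lam) (char_poly_mx AL) = lam%:M - AL.
Proof.
apply/matrixP => i j; rewrite !mxE /horner_eval hornerD hornerN hornerMn hornerX.
by rewrite hornerC.
Qed.

Lemma charLE lam : charL lam = \det (lam%:M - AL).
Proof. by rewrite /charL -char_poly_mx_eval det_map_mx. Qed.

Lemma horner_secular_poly lam : secular_poly.[lam] = secular_num lam.
Proof.
rewrite /secular_poly /secular_num hornerD hornerN !hornerM hornerX hornerC.
congr (_ - _ * _); rewrite horner_sum; apply: eq_bigr => j _.
have indic_eval : map_mx (horner_eval lam) (indicL _) = indicL R.
  by apply/matrixP => i i'; rewrite !mxE /horner_eval hornerMn hornerC.
by rewrite /solL -indic_eval -char_poly_mx_eval -map_mx_adj -map_mxM [RHS]mxE.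
Qed.

Lemma mulmx_charL_row (v : 'rV[R]_n) lam j :
  (v *m (lam%:M - AL)) 0 j = lam * v 0 j - (if j \in L then adjL e L (v 0) j else 0).
Proof.
rewrite mulmxBr mul_mx_scalar !mxE; congr (_ - _).
case: ifP => jL; last by apply: big1 => i _; rewrite mxE /eL jL andbF mulr0.
rewrite /adjL (bigID (mem L)) /= [X in _ + X]big1 ?addr0 => [|i /negbTE iL].
  by apply: eq_bigr => i iL; rewrite mxE /eL iL jL mulrC.
by rewrite mxE /eL iL mulr0.
Qed.

Lemma solL_mx lam : solL lam *m (lam%:M - AL) = charL lam *: indicL R.
Proof. by rewrite /solL -mulmxA mul_adj_mx mul_mx_scalar charLE. Qed.

Lemma solL_in lam j : j \in L -> lam * solL lam 0 j = adjL e L (solL lam 0) j + charL lam.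
Proof.
move=> jL; have := congr1 (fun M : 'rV[R]_n => M 0 j) (solL_mx lam).
by rewrite mulmx_charL_row jL !mxE jL mulr1 => <-; ring.
Qed.

Lemma solL_out lam j : j \notin L -> lam * solL lam 0 j = 0.
Proof.
move=> jL; have := congr1 (fun M : 'rV[R]_n => M 0 j) (solL_mx lam).
by rewrite mulmx_charL_row (negbTE jL) !mxE (negbTE jL) mulr0 subr0.
Qed.

Lemma charL_neq0 lam : 0 < k -> 2 * k <= `|lam| -> charL lam != 0.
Proof.
move=> k_gt0 lam_ge; rewrite charLE; apply/negP => /det0P [v vn0 vM].
have lam0 : lam != 0 by rewrite -normr_gt0; lra.
have Hr j : (v *m (lam%:M - AL)) 0 j = 0 by rewrite vM mxE.
have v_in : {in L, forall j, lam * v 0 j = adjL e L (v 0) j + 0}.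
  move=> j jL; apply/eqP; rewrite addr0 -subr_eq0.
  by have := Hr j; rewrite mulmx_charL_row jL => ->.
move/negP: vn0; apply; apply/eqP/rowP => j; rewrite mxE.
have [jL|jL] := boolP (j \in L).
  apply/normr0_eq0/eqP; rewrite eq_le normr_ge0 andbT.
  by have := resolvent_norm_le v_in k_gt0 lam_ge jL; rewrite normr0 mulr0 mul0r.
move: (Hr j); rewrite mulmx_charL_row (negbTE jL) subr0 => /eqP.
by rewrite mulf_eq0 (negbTE lam0) => /eqP.
Qed.

Lemma eigenvalue_secular_root lam : lam != 0 -> charL lam != 0 -> 0 < k ->
  secular_num lam = 0 -> eigenvalue A lam.
Proof.
move=> lam0 q0 k_gt0 P0.
set x := solL lam 0.
have x_out j : j \notin L -> x j = 0.
  by move=> jL; have /eqP := solL_out lam jL; rewrite mulf_eq0 (negbTE lam0) => /eqP.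
have ms : m * sumL L x = lam * charL lam.
  by apply/esym/eqP; rewrite -subr_eq0; apply/eqP.
set v : 'rV[R]_n := \row_j (if j \in L then lam * x j else sumL L x).
have vL i : i \in L -> v 0 i = lam * x i by move=> iL; rewrite mxE iL.
apply/eigenvalueP; exists v.
  apply/rowP => j; rewrite [RHS]mxE; have [jL|jL] := boolP (j \in L).
    rewrite (mulmx_adj_row_in v jL) (eq_adjL e vL) adjL_scale.
    rewrite (eq_bigr (fun _ => sumL L x)) => [|i]; last by rewrite inE mxE => /negbTE ->.
    rewrite sumr_const -mulr_natl ms vL // mulrA -expr2 expr2 -mulrA solL_in //; ring.
  by rewrite (mulmx_adj_row_out v jL) (eq_sumL vL) sumL_scale mxE (negbTE jL).
apply: contraNneq q0 => v0.
have [j0 j0L] : exists j, j \in L by apply/set0Pn; rewrite -card_gt0 -(ltr0n R).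
have x0 : {in L, forall i, x i = 0}.
  move=> i iL; have /esym/eqP := vL i iL; rewrite v0 mxE.
  by rewrite mulf_eq0 (negbTE lam0) => /eqP.
have T0 : adjL e L x j0 = 0 by rewrite /adjL big1 // => i iL; rewrite x0 ?mulr0.
by have := solL_in lam j0L; rewrite -/x x0 // mulr0 T0 add0r => <-.
Qed.

Lemma secular_ratio_approx lam : 0 < k -> 2 * k <= `|lam| ->
  `|lam * (secular_num lam / charL lam) - secular lam| <= 2 * m * k ^+ 5 / `|lam| ^+ 4.
Proof.
move=> k_gt0 lam_ge.
have q0 := charL_neq0 k_gt0 lam_ge.
have -> : lam * (secular_num lam / charL lam) - secular lam
   = - (lam * m * (sumL L (solL lam 0) - charL lam * resolvent3 e L lam) / charL lam).
  by rewrite /secular_num /secular; field.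
by rewrite normrN; apply: norm_secular_err_le => // j; exact: solL_in.
Qed.

Lemma eigenvalue_between lam1 lam2 : lam1 <= lam2 -> 0 < k ->
  (forall lam, lam1 <= lam <= lam2 -> 2 * k <= `|lam|) ->
  (secular_num lam1 / charL lam1) * (secular_num lam2 / charL lam2) < 0 ->
  exists2 lam0, lam1 <= lam0 <= lam2 & eigenvalue A lam0.
Proof.
move=> le12 k_gt0 Hr Hs.
have q1 := charL_neq0 k_gt0 (Hr lam1 ltac:(by rewrite lexx le12)).
have q2 := charL_neq0 k_gt0 (Hr lam2 ltac:(by rewrite lexx le12)).
have qq : 0 < charL lam1 * charL lam2.
  rewrite ltNge; apply/negP => H.
  have [x /[!in_itv]/= xin rx] := @polyrcf.poly_ivt R (char_poly AL) lam1 lam2 le12 H.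
  by move/negP: (charL_neq0 k_gt0 (Hr x xin)); apply; exact: rx.
have PP : secular_poly.[lam1] * secular_poly.[lam2] <= 0.
  rewrite !horner_secular_poly.
  have -> : secular_num lam1 * secular_num lam2 = (secular_num lam1 / charL lam1
      * (secular_num lam2 / charL lam2)) * (charL lam1 * charL lam2).
    by field; rewrite q1 q2.
  nra.
have [x /[!in_itv]/= xin rx] := @polyrcf.poly_ivt R secular_poly lam1 lam2 le12 PP.
exists x => //; have Hx := Hr x xin.
apply: eigenvalue_secular_root; first by rewrite -normr_gt0; lra.
- exact: charL_neq0.
- by [].
- by move: rx; rewrite /root horner_secular_poly => /eqP.
Qed.

End Spectrum.

Lemma secular_err_le (R : realFieldType) (k m g lam : R) : 0 < k -> 0 < g ->
  g ^+ 2 = k * m -> g / 2 <= `|lam| -> 2 * m * k ^+ 5 / `|lam| ^+ 4 <= 32 * k ^+ 4 / g ^+ 2.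
Proof.
move=> k_gt0 g_gt0 g_sq lam_ge.
have l0 : 0 < `|lam| by lra.
have l4 : g ^+ 4 / 16 <= `|lam| ^+ 4.
  have : (g / 2) ^+ 4 <= `|lam| ^+ 4 by rewrite lerXn2r // ?nnegrE; lra.
  by rewrite expr_div_n (_ : 2 ^+ 4 = 16) //; ring.
rewrite ler_pdivrMr ?exprn_gt0 //.
rewrite (_ : 32 * k ^+ 4 / g ^+ 2 * `|lam| ^+ 4 = 32 * k ^+ 4 * (`|lam| ^+ 4 / g ^+ 2));
  last by field; rewrite gt_eqF.
have -> : 2 * m * k ^+ 5 = 32 * k ^+ 4 * ((g ^+ 4 / 16) / g ^+ 2).
  rewrite (_ : g ^+ 4 = g ^+ 2 * g ^+ 2); last by ring.
  by rewrite {1}g_sq; field; rewrite gt_eqF.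
rewrite ler_wpM2l ?mulr_ge0 ?exprn_ge0 ?(ltW k_gt0) //.
by rewrite ler_wpM2r // invr_ge0 exprn_ge0 // ltW.
Qed.

Lemma sign_interval (R : realDomainType) (f : R -> R) (s u v : R) :
  s = 1 \/ s = -1 -> u <= v -> exists lo hi, [/\ lo <= hi,
    f lo * f hi = f (s * u) * f (s * v) & forall x, lo <= x <= hi -> u <= s * x <= v].
Proof.
move=> [] -> uv; first by exists u, v; split=> // [|x]; rewrite !mul1r.
exists (- v), (- u); split=> [|//|x]; first by rewrite lerN2.
  by rewrite !mulN1r mulrC.
by rewrite mulN1r lerNr lerNl andbC.
Qed.

Section ExtremeEigenvalue.
Variables (R : realType) (n : nat) (e : rel 'I_n) (L : {set 'I_n}).
Hypothesis e_sym : forall u v, e u v = e v u.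
Hypothesis e_in_out : forall u v, u \in L -> v \notin L -> e u v.
Hypothesis e_out_out : forall u v, u \notin L -> v \notin L -> ~~ e u v.

Local Notation A := (adj_mx R e).
Local Notation k := (#|L|%:R : R).
Local Notation m := (#|~: L|%:R : R).

(* [s = 1] describes the largest eigenvalue and [s = -1] the smallest one. *)
Variables (g s al be ga c : R).
Hypothesis s_sign : s = 1 \/ s = -1.
Hypothesis k_gt0 : 0 < k.
Hypothesis g_ge : 4 * k <= g.
Hypothesis g_sq : g ^+ 2 = k * m.
Hypothesis secular_psi : forall mu, mu != 0 -> secular e L (s * mu) = psi k al be ga g mu.
Hypothesis c_gt0 : 0 < c.

Local Notation K := (32 * k ^+ 4).
Local Notation a := (approx_root al be ga g).
Local Notation t := (c / g ^+ 3).

Hypothesis bracket : root_bracket k al be ga K c g.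

Lemma norm_sign_mul (y : R) : `|s * y| = `|y|.
Proof. by case: s_sign => ->; rewrite ?mul1r ?mulN1r ?normrN. Qed.

(* [lra] ignores section hypotheses, so the proofs below first copy those they need. *)

Lemma eigen_lt_bracket x : eigenvalue A x -> s * x < a + t.
Proof.
move=> /eigenvalueP [v Hv vn0].
have k0 := k_gt0; have gk := g_ge.
have t0 : 0 <= t by rewrite divr_ge0 ?exprn_ge0 ?(ltW c_gt0) //; lra.
case: bracket => low _ _ below.
have [sx_lt|sx_ge] := ltP (s * x) (g / 2); first lra.
have x_ge : g / 2 <= `|x| by rewrite -norm_sign_mul (le_trans sx_ge (ler_norm _)).
apply: below => //; rewrite -secular_psi; last by rewrite -normr_gt0 norm_sign_mul; lra.
have -> : s * (s * x) = x by case: s_sign => ->; rewrite ?mul1r ?mulN1r ?opprK.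
have g0 : 0 < g by lra.
apply: le_trans (ler_norm _) (le_trans _ (secular_err_le k0 g0 g_sq x_ge)).
by apply: (eigen_secular_small e_sym e_in_out e_out_out Hv vn0 k0); lra.
Qed.

Local Notation ratio lam := (secular_num e L lam / charL e L lam).

Lemma secular_ratio_near_psi mu : g / 2 <= mu ->
  `|s * mu * ratio (s * mu) - psi k al be ga g mu| <= K / g ^+ 2.
Proof.
move=> mu_ge.
have k0 := k_gt0; have gk := g_ge; have g0 : 0 < g by lra.
have smu_ge : g / 2 <= `|s * mu| by rewrite norm_sign_mul (le_trans mu_ge (ler_norm _)).
rewrite -secular_psi; last by rewrite gt_eqF //; lra.
apply: le_trans (secular_ratio_approx e k0 _) _; first lra.
exact: secular_err_le.
Qed.

Lemma eigen_near_root : exists2 x, eigenvalue A x & `|s * x - a| <= t.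
Proof.
have k0 := k_gt0; have gk := g_ge; have g0 : 0 < g by lra.
have t0 : 0 <= t by rewrite divr_ge0 ?exprn_ge0 ?(ltW c_gt0) //; lra.
case: bracket => low above below _.
have := secular_ratio_near_psi low; rewrite ler_norml => /andP[_ S1].
have high : g / 2 <= a + t by lra.
have := secular_ratio_near_psi high; rewrite ler_norml => /andP[S2 _].
have neg : s * (a - t) * ratio (s * (a - t)) < 0 by lra.
have pos : 0 < s * (a + t) * ratio (s * (a + t)) by lra.
have sgn : ratio (s * (a - t)) * ratio (s * (a + t)) < 0.
  have prod_pos : 0 < s * (a - t) * (s * (a + t)).
    rewrite mulrACA (_ : s * s = 1) ?mul1r; first by apply: mulr_gt0; lra.
    by case: s_sign => ->; rewrite ?mulr1 ?mulrNN ?mulr1.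
  by rewrite -(pmulr_rlt0 _ prod_pos) mulrACA pmulr_llt0.
have att : a - t <= a + t by lra.
have [lo [hi [lohi ratioE inside]]] := sign_interval (fun lam => ratio lam) s_sign att.
have sgn' : ratio lo * ratio hi < 0 by rewrite ratioE.
have lam_ge lam : lo <= lam <= hi -> 2 * k <= `|lam|.
  move=> /inside /andP[lam_ge _]; rewrite -norm_sign_mul.
  by apply: le_trans (ler_norm _); lra.
have [x /inside x_near Ex] :=
  eigenvalue_between e_sym e_in_out e_out_out lohi k0 lam_ge sgn'.
by exists x => //; rewrite ler_norml; lra.
Qed.

Lemma extreme_eigen_approx :
  (forall x, eigenvalue A x -> s * x <= a + t) /\ exists2 x, eigenvalue A x & `|s * x - a| <= t.
Proof. by split; [move=> x /eigen_lt_bracket /ltW | exact: eigen_near_root]. Qed.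

End ExtremeEigenvalue.

Lemma spread_bracket (R : realType) (S : set R) (a1 a2 t1 t2 : R) :
  (forall x, S x -> x <= a1 + t1) -> (exists2 x, S x & `|x - a1| <= t1) ->
  (forall x, S x -> - x <= a2 + t2) -> (exists2 x, S x & `|- x - a2| <= t2) ->
  `|sup S - inf S - (a1 + a2)| <= t1 + t2.
Proof.
move=> ub [x1 Sx1 near1] lb [x2 Sx2 near2].
have sup_le : sup S <= a1 + t1 by apply: ge_sup; [exists x1 | exact: ub].
have sup_ge : x1 <= sup S by apply: sup_upper_bound => //; split; [exists x1 | exists (a1 + t1)].
have inf_ge : - (a2 + t2) <= inf S by apply: lb_le_inf; [exists x2 | move=> x /lb; rewrite lerNl].
have inf_le : inf S <= x2 by apply: ge_inf => //; exists (- (a2 + t2)) => x /lb; rewrite lerNl.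
move: near1 near2; rewrite !ler_norml => /andP[? ?] /andP[? ?].
by apply/andP; split; lra.
Qed.

(* The coefficients for which [psi_c1], [psi_c2], [psi_c3] equal [w1], [w2], [w3]. *)
Definition root_coef1 (R : fieldType) (k w1 : R) := w1 / (2 * k).
Definition root_coef2 (R : fieldType) (k w1 w2 : R) :=
  (w2 - 3 * k * root_coef1 k w1 ^+ 2) / (2 * k).
Definition root_coef3 (R : fieldType) (k w1 w2 w3 : R) :=
  (w3 - 8 * k * root_coef1 k w1 * root_coef2 k w1 w2 - 4 * k * root_coef1 k w1 ^+ 3) / (2 * k).

Lemma secular_psiE (R : realType) n (e : rel 'I_n) (L : {set 'I_n}) (k w1 w2 w3 s g mu : R) :
  #|L|%:R = k -> walks R e L 1 = w1 -> walks R e L 2 = w2 -> walks R e L 3 = w3 ->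
  s = 1 \/ s = -1 -> 0 < k -> g ^+ 2 = k * #|~: L|%:R -> mu != 0 ->
  secular e L (s * mu) = psi k (s * root_coef1 k w1) (root_coef2 k w1 w2)
                               (s * root_coef3 k w1 w2 w3) g mu.
Proof.
move=> <- <- <- <- s_sign k_gt0 g_sq mu0.
rewrite /secular /resolvent3 /psi /psi_c1 /psi_c2 /psi_c3 g_sq /root_coef3 /root_coef2 /root_coef1.
by case: s_sign => ->; field; rewrite mu0 gt_eqF.
Qed.

Lemma approx_root_sum (R : realFieldType) (k w1 w2 w3 g : R) : k != 0 -> g != 0 ->
  approx_root (1 * root_coef1 k w1) (root_coef2 k w1 w2) (1 * root_coef3 k w1 w2 w3) g
  + approx_root (-1 * root_coef1 k w1) (root_coef2 k w1 w2) (-1 * root_coef3 k w1 w2 w3) g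
  = 2 * g + k^-1 * (- 3 / (4 * k) * w1 ^+ 2 + w2) / g.
Proof.
by move=> k0 g0; rewrite /approx_root /root_coef2 /root_coef1; field; rewrite k0 g0.
Qed.

Lemma gamma_nr_sq (R : realType) n r (L : {set 'I_n}) : (2 <= r)%N -> #|L| = (r - 2)%N ->
  gamma_nr R n r ^+ 2 = #|L|%:R * #|~: L|%:R.
Proof.
move=> r2 cardL.
have rk : r%:R - 2 = (r - 2)%:R :> R by rewrite natrB.
have nE : n%:R = r%:R - 2 + #|~: L|%:R :> R by rewrite rk -natrD -cardL cardsC card_ord.
have mE : n%:R - r%:R + 2 = #|~: L|%:R :> R by rewrite nE; ring.
by rewrite /gamma_nr mE rk -cardL sqr_sqrtr // mulr_ge0 // ler0n.
Qed.

Lemma gamma_nr_ge (R : realType) n r (G : R) : (3 <= r)%N -> 0 <= G ->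
  (r - 2 + (Num.truncn (G ^+ 2)).+1 <= n)%N -> G <= gamma_nr R n r.
Proof.
move=> r3 G0 Hn; have G2 := exprn_ge0 2 G0.
have r2n : (r - 2 <= n)%N := leq_trans (leq_addr _ _) Hn.
have rk : r%:R - 2 = (r - 2)%:R :> R by rewrite natrB // ltnW.
have r31 : 1 <= r%:R - 2 :> R by rewrite rk ler1n subn_gt0.
have Gn : G ^+ 2 <= n%:R - r%:R + 2.
  have -> : n%:R - r%:R + 2 = (n - (r - 2))%:R :> R by rewrite natrB // -rk; ring.
  by apply/ltW/(lt_le_trans (truncnS_gt _)); rewrite ler_nat leq_subRL.
have -> : G = Num.sqrt (G ^+ 2) by rewrite sqrtr_sqr ger0_norm.
by rewrite /gamma_nr ler_sqrt; [nra | apply: mulr_ge0; lra].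
Qed.

Definition spread_expansion_bound (R : realType) (r : nat) (w : R * R * R) (C : R) (N : nat) :=
  forall n, (N <= n)%N -> forall (e : rel 'I_n) (L : {set 'I_n}),
  (forall u v, e u v = e v u) -> #|L| = (r - 2)%N ->
  (forall u v, u \in L -> v \notin L -> e u v) ->
  (forall u v, u \notin L -> v \notin L -> ~~ e u v) ->
  (walks R e L 1, walks R e L 2, walks R e L 3) = w ->
  let g := gamma_nr R n r in
  `| spread R e - (2 * g + (r%:R - 2)^-1 *
       (- 3 / (4 * (r%:R - 2)) * (ell1 R e L) ^+ 2 + ell2 R e L) / g) | <= C / g ^+ 3.

Lemma spread_expansion_bound_mono (R : realType) r (w : R * R * R) C C' N N' :
  C <= C' -> (N <= N')%N -> spread_expansion_bound r w C N -> spread_expansion_bound r w C' N'.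
Proof.
move=> CC' NN' H n Hn e L e_sym cardL e_in_out e_out_out wE /=.
apply: le_trans (H n (leq_trans NN' Hn) e L e_sym cardL e_in_out e_out_out wE) _.
by rewrite ler_wpM2r // invr_ge0 exprn_ge0 // sqrtr_ge0.
Qed.

Lemma uniform_bound (R : realDomainType) (T : finType) (P : T -> R -> nat -> Prop) :
  (forall t C C' N N', C <= C' -> (N <= N')%N -> P t C N -> P t C' N') ->
  (forall t, exists C N, P t C N) -> exists C N, forall t, P t C N.
Proof.
move=> mono ex.
suff [C [N H]] : exists C N, forall t, t \in enum T -> P t C N.
  by exists C, N => t; apply: H; rewrite mem_enum.
elim: (enum T) => [|t s [C [N H]]]; first by exists 0, 0%N.
have [C' [N' H']] := ex t.
exists (Num.max C C'), (maxn N N') => u; rewrite inE => /orP[/eqP->|us].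
  by apply: mono H'; rewrite ?le_max ?lexx ?orbT ?leq_maxr.
by apply: mono (H u us); rewrite ?le_max ?lexx ?leq_maxl.
Qed.

Lemma spread_expansion_fixed_walks (R : realType) r (w : R * R * R) : (3 <= r)%N ->
  exists C N, spread_expansion_bound r w C N.
Proof.
case: w => [[w1 w2] w3] r3.
set kR : R := (r - 2)%:R.
have kR_gt0 : 0 < kR by rewrite ltr0n subn_gt0.
set al := root_coef1 kR w1; set be := root_coef2 kR w1 w2; set ga := root_coef3 kR w1 w2 w3.
have K0 : 0 <= 32 * kR ^+ 4 by rewrite mulr_ge0 ?exprn_ge0 ?ltW.
have [c1 [G1 [c1_gt0 [G1_ge br1]]]] := psi_root_bracket (1 * al) be (1 * ga) kR_gt0 K0.
have [c2 [G2 [c2_gt0 [G2_ge br2]]]] := psi_root_bracket (-1 * al) be (-1 * ga) kR_gt0 K0.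
set G := G1 + G2 + 4 * kR.
exists (c1 + c2), (r - 2 + (Num.truncn (G ^+ 2)).+1)%N.
move=> n Hn e L e_sym cardL e_in_out e_out_out [w1E w2E w3E] /=.
set g := gamma_nr R n r.
have kE : #|L|%:R = kR by rewrite cardL.
have g_sq : g ^+ 2 = kR * #|~: L|%:R by rewrite -kE (gamma_nr_sq _ _ cardL) // ltnW.
have gG : G <= g by apply: gamma_nr_ge => //; rewrite /G; lra.
have [gG1 gG2 g_ge] : [/\ G1 <= g, G2 <= g & 4 * kR <= g] by rewrite /G in gG; split; lra.
have ext s c : s = 1 \/ s = -1 -> 0 < c ->
    root_bracket kR (s * al) be (s * ga) (32 * kR ^+ 4) c g ->
    let a := approx_root (s * al) be (s * ga) g in
    (forall x, eigenvalue (adj_mx R e) x -> s * x <= a + c / g ^+ 3)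
    /\ exists2 x, eigenvalue (adj_mx R e) x & `|s * x - a| <= c / g ^+ 3.
  move=> s_sign c_gt0 br /=.
  apply: (extreme_eigen_approx e_sym e_in_out e_out_out s_sign); rewrite ?kE //.
  by move=> mu mu0; rewrite (secular_psiE kE w1E w2E w3E s_sign kR_gt0 g_sq mu0).
have [ub1 near1] := ext 1 c1 (or_introl erefl) c1_gt0 (br1 g gG1).
have [ub2 near2] := ext (-1) c2 (or_intror erefl) c2_gt0 (br2 g gG2).
have rk : r%:R - 2 = kR by rewrite /kR natrB // ltnW.
rewrite rk ell1E ell2E w1E w2E -(@approx_root_sum _ kR w1 w2 w3 g) ?gt_eqF //; last lra.
rewrite mulrDl; apply: spread_bracket.
- by move=> x /ub1; rewrite [1 * x]mul1r.
- by case: near1 => x ?; rewrite [1 * x]mul1r; exists x.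
- by move=> x /ub2; rewrite [-1 * x]mulN1r.
- by case: near2 => x ?; rewrite [-1 * x]mulN1r; exists x.
Qed.

Unset Implicit Arguments.

Theorem lemma4p1 (R : realType) (r : nat) (hr : (3 <= r)%N) :
  exists (C : R) (N : nat), forall n : nat, (N <= n)%N ->
  forall e : rel 'I_n, max_spread_Kr_free R r e ->
  forall L : {set 'I_n}, #|L| = (r - 2)%N ->
    (forall u v, u \in L -> v \notin L -> e u v) ->
    (forall u v, u \notin L -> v \notin L -> ~~ e u v) ->
    let g := gamma_nr R n r in
    `| spread R e
       - (2 * g + (r%:R - 2)^-1 *
            (- 3 / (4 * (r%:R - 2)) * (ell1 R e L) ^+ 2 + ell2 R e L) / g) |
      <= C / g ^+ 3.
Proof.
set k := (r - 2)%N.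
pose nat3 (t : 'I_(k ^ 2).+1 * 'I_(k ^ 3).+1 * 'I_(k ^ 4).+1) : R * R * R :=
  ((t.1.1 : nat)%:R, (t.1.2 : nat)%:R, (t.2 : nat)%:R).
have [C [N bound]] := uniform_bound (fun t => @spread_expansion_bound_mono R r (nat3 t))
  (fun t => spread_expansion_fixed_walks (nat3 t) hr).
exists C, N => n Hn e [[e_sym _] _] L cardL e_in_out e_out_out.
have [w1 w1_le w1E] := walks_nat R e L 1.
have [w2 w2_le w2E] := walks_nat R e L 2.
have [w3 w3_le w3E] := walks_nat R e L 3.
rewrite cardL -/k -ltnS in w1_le; rewrite cardL -/k -ltnS in w2_le.
rewrite cardL -/k -ltnS in w3_le.
have := bound (Ordinal w1_le, Ordinal w2_le, Ordinal w3_le) n Hn e L e_sym cardL e_in_out e_out_out.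
by rewrite w1E w2E w3E; apply.
Qed.
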